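(* Consider a Fisher market with $n$ agents, a finite set $M$ of indivisible items, budgets $b_1,\dots,b_n>0$ that are pairwise distinct, and each agent having a lexicographic preference over $2^M$. Then a competitive equilibrium exists.
   Context: A preference $\preceq_i$ on $2^M$ is lexicographic if there is a strict order $\succ^*_i$ on items such that for $S\ne T$, $S\succ_i T$ iff the $\succ^*_i$-maximal item of $S\setminus T$ is $\succ^*_i$-preferred to the $\succ^*_i$-maximal item of $T\setminus S$ (trivially true when $T\setminus S=\emptyset$). Given item prices $p$ with $p(S)=\sum_{j\in S}p_j$, a bundle $S$ is demanded by agent $i$ if $p(S)\le b_i$ and $p(T)>b_i$ for every $T$ with $S\prec_i T$. A competitive equilibrium is a pair $(\mathcal S,p)$ with $\mathcal S=(S_1,\dots,S_n)$ a partition of all of $M$ among the agents (parts may be empty) such that $S_i$ is demanded by agent $i$ at prices $p$ for every $i$. *)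

From mathcomp Require Import all_boot all_order all_algebra.
From mathcomp Require Import reals.
Set Implicit Arguments. Unset Strict Implicit. Unset Printing Implicit Defensive.
Import Order.TTheory GRing.Theory Num.Theory.
Local Open Scope ring_scope.

Definition strict_total_order (M : finType) (o : rel M) : Prop :=
  [/\ irreflexive o, transitive o & forall x y, x != y -> o x y || o y x].

Definition maxItem (M : finType) (o : rel M) (A : {set M}) (j : M) : Prop :=
  j \in A /\ forall k, k \in A -> k != j -> o j k.

Definition lex_pref (M : finType) (o : rel M) (S T : {set M}) : Prop :=
  S <> T /\
  (T :\: S = set0 \/
   exists j k, [/\ maxItem o (S :\: T) j, maxItem o (T :\: S) k & o j k]).

Definition lexicographic (M : finType) (pref : {set M} -> {set M} -> Prop) : Prop :=
  exists o : rel M, strict_total_order o /\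
    forall S T, pref S T <-> lex_pref o S T.

Definition price (R : realType) (M : finType) (p : M -> R) (S : {set M}) : R :=
  \sum_(j in S) p j.

Definition demanded (R : realType) (M : finType)
    (pref : {set M} -> {set M} -> Prop) (b : R) (p : M -> R) (S : {set M}) : Prop :=
  price p S <= b /\ forall T, pref T S -> b < price p T.

Definition is_allocation (n : nat) (M : finType) (S : 'I_n -> {set M}) : Prop :=
  (forall i i', i != i' -> [disjoint S i & S i']) /\
  \bigcup_(i < n) S i = [set: M].

Definition competitive_equilibrium (R : realType) (n : nat) (M : finType)
    (pref : 'I_n -> {set M} -> {set M} -> Prop) (b : 'I_n -> R)
    (S : 'I_n -> {set M}) (p : M -> R) : Prop :=
  is_allocation S /\ (forall j, 0 <= p j) /\
  forall i, demanded (pref i) (b i) p (S i).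

From mathcomp Require Import all_boot all_order all_algebra.
From mathcomp Require Import reals.
Set Implicit Arguments. Unset Strict Implicit. Unset Printing Implicit Defensive.
Import Order.TTheory GRing.Theory Num.Theory.
Local Open Scope ring_scope.

(* Serve the agents in decreasing order of budget (budgets are distinct, so
   the richest is strictly richest).  The richest remaining agent r takes
   alone her favourite remaining item a, priced at b r: any bundle she
   prefers to {a} contains a and something more, so it costs more than b r,
   while a is unaffordable for every poorer agent, so for them the market
   without r and a is unchanged.  The poorest agent takes whatever is left at
   prices small enough to afford all of it; no bundle beats everything that
   is available. *)

Section LexicographicPreference.
Variables (M : finType) (o : rel M).

Lemma lex_pref_irrefl (S : {set M}) : ~ lex_pref o S S.
Proof. by case. Qed.

Lemma lex_pref_subsetPn (T S : {set M}) :
  lex_pref o T S -> exists2 j, j \in T & j \notin S.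
Proof.
case=> neqTS [/eqP|[j [k [[jTS _] _ _]]]].
- rewrite setD_eq0 => sST; apply/subsetPn; apply: contra_notN neqTS => sTS.
  by apply/eqP; rewrite eqEsubset sTS.
- by move: jTS; rewrite inE => /andP[jNS jT]; exists j.
Qed.

Hypothesis o_order : strict_total_order o.

Lemma maxItem_exists (X : {set M}) : X != set0 -> exists a, maxItem o X a.
Proof.
case/set0Pn=> x0 x0X; have [irr tr tot] := o_order.
(* an item beating the most items of X beats all of them *)
pose beaten a := #|[set y in X | o a y]|.
case: (@arg_maxnP _ x0 (mem X) beaten x0X) => a aX amax.
exists a; split=> // y yX ya; apply/negPn/negP => ayN.
have ya' : o y a by move: (tot _ _ ya); rewrite (negbTE ayN) orbF.
suff /negP[] : ~~ (beaten y <= beaten a)%N by exact: amax.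
rewrite -ltnNge; apply: proper_card; apply/properP; split.
- by apply/subsetP => z; rewrite !inE => /andP[-> az]; apply: tr az.
- by exists a; rewrite !inE ?irr ?andbF // ya' andbT.
Qed.

Lemma lex_pref_maxItem (X T S : {set M}) a :
  maxItem o X a -> a \in S -> T \subset X -> lex_pref o T S -> a \in T.
Proof.
have [irr tr _] := o_order.
case=> _ amax aS /subsetP sTX [_ pTS]; apply/negPn/negP => aT.
have aST : a \in S :\: T by rewrite inE aT.
case: pTS => [/eqP|[j [k [[jTS _] [_ kmax] jk]]]].
  by rewrite setD_eq0 => /subsetP/(_ a aS); apply/negP.
move: jTS; rewrite inE => /andP[_ jT].
have aj : o a j by apply: amax; [exact: sTX | apply: contraNneq aT => <-].
have ak := tr _ _ _ aj jk.
have [ak'|aNk] := eqVneq a k; first by move: ak; rewrite -ak' irr.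
by move: (irr a); rewrite (tr _ _ _ ak (kmax a aST aNk)).
Qed.

End LexicographicPreference.

Section Price.
Variables (R : realType) (M : finType) (p : M -> R).

Lemma price_ge_item (S : {set M}) j :
  {in S, forall k, 0 <= p k} -> j \in S -> p j <= price p S.
Proof.
move=> p_ge0 jS; rewrite /price (big_setD1 j jS) /= lerDl.
by apply: sumr_ge0 => k; rewrite inE => /andP[_ /p_ge0].
Qed.

Lemma price_gt_item (S : {set M}) j k :
  {in S, forall k, 0 < p k} -> j \in S -> k \in S -> k != j -> p j < price p S.
Proof.
move=> p_gt0 jS kS kj; rewrite /price (big_setD1 j jS) /= ltrDl.
have kSj : k \in S :\ j by rewrite !inE kj.
apply: lt_le_trans (p_gt0 k kS) _; apply: price_ge_item kSj.
by move=> l /setD1P[_ /p_gt0/ltW].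
Qed.

End Price.

Section Market.
Variables (R : realType) (n : nat) (M : finType).
Variables (pref : 'I_n -> {set M} -> {set M} -> Prop) (b : 'I_n -> R).
Hypothesis b_gt0 : forall i, 0 < b i.
Hypothesis pref_lex : forall i, lexicographic (pref i).

Definition partition_on (A : {set 'I_n}) (X : {set M}) (S : 'I_n -> {set M}) :=
  [/\ {in A, forall i, S i \subset X},
      {in A &, forall i i', i != i' -> [disjoint S i & S i']} &
      {in X, forall j, exists2 i, i \in A & j \in S i}].

(* A competitive equilibrium of the market restricted to the agents A and the
   items X: only bundles inside X compete with the allocated ones. *)
Definition equilibrium_on (A : {set 'I_n}) (X : {set M})
    (S : 'I_n -> {set M}) (p : M -> R) :=
  [/\ partition_on A X S, {in X, forall j, 0 < p j},
      {in A, forall i, price p (S i) <= b i} &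
      forall i (T : {set M}),
        i \in A -> T \subset X -> pref i T (S i) -> b i < price p T].

Lemma equilibrium_on_set0 A p : equilibrium_on A set0 (fun _ => set0) p.
Proof.
split=> [|j|i _|i T _]; rewrite ?inE //.
- by split=> [i _|i i' _ _ _|j]; rewrite ?sub0set -?setI_eq0 ?set0I ?inE.
- by rewrite /price big_set0; exact/ltW/b_gt0.
- rewrite subset0 => /eqP ->.
  by have [o [_ pref_o]] := pref_lex i; move/pref_o/lex_pref_irrefl.
Qed.

Lemma equilibrium_on_set1 r X :
  equilibrium_on [set r] X (fun _ => X) (fun _ => b r / (#|X|.+1)%:R).
Proof.
split=> //.
- split=> [//|i i'|j jX]; last by exists r; rewrite ?inE.
  by rewrite !inE => /eqP-> /eqP->; rewrite eqxx.
- by move=> j _; rewrite divr_gt0 ?ltr0n.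
- move=> i /set1P->; rewrite /price sumr_const -[X in X <= _]mulr_natr mulrAC.
  by rewrite ler_pdivrMr ?ltr0n // ler_pM2l ?ler_nat.
- move=> i T /set1P-> /subsetP sTX.
  have [o [_ pref_o]] := pref_lex r.
  by case/pref_o/lex_pref_subsetPn=> j /sTX->.
Qed.

Lemma partition_on_setD1 (A : {set 'I_n}) (X : {set M}) S a i :
  partition_on A (X :\ a) S -> i \in A -> a \notin S i.
Proof.
by case=> sSX _ _ iA; apply/negP => /(subsetP (sSX i iA)); rewrite !inE eqxx.
Qed.

Lemma partition_on_extend (A : {set 'I_n}) (X : {set M}) S r a :
  r \in A -> a \in X -> partition_on (A :\ r) (X :\ a) S ->
  partition_on A X [eta S with r |-> [set a]].
Proof.
move=> rA aX partS; have [sSX disS covS] := partS.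
have aNS := partition_on_setD1 partS.
have inAr i : i \in A -> i != r -> i \in A :\ r by rewrite !inE => -> ->.
split=> [i iA|i i' iA i'A ii'|j jX] /=.
- case: eqP => [_|/eqP ir]; first by rewrite sub1set.
  exact: subset_trans (sSX i (inAr i iA ir)) (subD1set X a).
- case: eqP => [ir|/eqP ir]; case: eqP => [i'r|/eqP i'r].
  + by rewrite ir i'r eqxx in ii'.
  + by rewrite disjoints1 aNS ?inAr.
  + by rewrite disjoint_sym disjoints1 aNS ?inAr.
  + exact: disS (inAr i iA ir) (inAr i' i'A i'r) ii'.
- have [->|ja] := eqVneq j a; first by exists r; rewrite ?eqxx ?inE.
  have [i /setD1P[ir iA] jS] : exists2 i, i \in A :\ r & j \in S i.
    by apply: covS; rewrite in_setD1 ja.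
  by exists i; rewrite // (negbTE ir).
Qed.

Lemma equilibrium_on_extend (A : {set 'I_n}) (X : {set M}) S p r a (o : rel M) :
  r \in A -> {in A, forall i, i != r -> b i < b r} ->
  strict_total_order o -> (forall T U, pref r T U <-> lex_pref o T U) ->
  maxItem o X a ->
  equilibrium_on (A :\ r) (X :\ a) S p ->
  equilibrium_on A X [eta S with r |-> [set a]] [eta p with a |-> b r].
Proof.
move=> rA r_richest o_order pref_r a_max [partS p_gt0 budgetS demandS].
set q := [eta p with a |-> b r].
have aX : a \in X by case: a_max.
have qa : q a = b r by rewrite /= eqxx.
have inAr i : i \in A -> i != r -> i \in A :\ r by rewrite !inE => -> ->.
have q_gt0 : {in X, forall j, 0 < q j}.
  by move=> j jX /=; case: eqP => [_|/eqP ja]; rewrite ?p_gt0 ?in_setD1 ?ja.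
have q_gt0_sub (T : {set M}) : T \subset X -> {in T, forall j, 0 < q j}.
  by move=> /subsetP sTX j /sTX/q_gt0.
have price_aN (T : {set M}) : a \notin T -> price q T = price p T.
  move=> aT; apply: eq_bigr => j jT /=.
  by case: eqP => // ja; rewrite -ja jT in aT.
split=> //; first exact: partition_on_extend.
- move=> i iA /=; case: eqP => [->|/eqP ir].
    by rewrite /price big_set1 qa.
  by rewrite price_aN ?budgetS ?inAr // (partition_on_setD1 partS) ?inAr.
move=> i T iA sTX /=; case: eqP => [->|/eqP ir] prefT.
- have prefT' := (pref_r _ _).1 prefT.
  have aT : a \in T.
    by apply: (lex_pref_maxItem o_order a_max _ sTX prefT'); rewrite inE.
  have [j jT /set1P/eqP ja] := lex_pref_subsetPn prefT'.
  by rewrite -qa; apply: price_gt_item (q_gt0_sub T sTX) aT jT ja.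
- have [aT|aT] := boolP (a \in T).
    apply: lt_le_trans (r_richest i iA ir) _; rewrite -qa.
    by apply: price_ge_item aT => k /(q_gt0_sub T sTX)/ltW.
  rewrite price_aN // demandS ?inAr //.
  apply/subsetP => j jT; rewrite in_setD1 (subsetP sTX j jT) andbT.
  by apply: contraNneq aT => <-.
Qed.

Hypothesis b_inj : forall i i', i != i' -> b i != b i'.

Lemma equilibrium_on_exists (A : {set 'I_n}) (X : {set M}) :
  A != set0 -> exists S p, equilibrium_on A X S p.
Proof.
move: {2}#|A| (erefl #|A|) => k; elim: k A X => [|k IH] A X cardA.
  by move/eqP: cardA; rewrite cards_eq0 => /eqP->; rewrite eqxx.
move=> /set0Pn[i0 i0A].
have [->|XN0] := eqVneq X set0.
  by exists (fun _ => set0), (fun _ => 0); apply: equilibrium_on_set0.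
have [k0|k_gt0] := posnP k.
  have /cards1P[r ->] : #|A| == 1%N by rewrite cardA k0.
  by eexists _, _; apply: equilibrium_on_set1.
have [r rA r_max] : exists2 r, r \in A & {in A, forall i, b i <= b r}.
  by case: (arg_maxP b i0A) => r rA r_max; exists r.
have r_richest : {in A, forall i, i != r -> b i < b r}.
  by move=> i iA ir; rewrite lt_neqAle b_inj ?r_max.
have [o [o_order pref_r]] := pref_lex r.
have [a a_max] := maxItem_exists o_order XN0.
have cardAr : #|A :\ r| = k.
  by move: cardA; rewrite (cardsD1 r A) rA => -[].
have [|S [p eqS]] := IH (A :\ r) (X :\ a) cardAr.
  by rewrite -card_gt0 cardAr.
by eexists _, _;
  apply: equilibrium_on_extend rA r_richest o_order pref_r a_max eqS.
Qed.

Lemma equilibrium_on_setT S p :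
  equilibrium_on [set: 'I_n] [set: M] S p -> competitive_equilibrium pref b S p.
Proof.
case=> [[_ disS covS]] p_gt0 budgetS demandS.
split; [split|split].
- by move=> i i'; apply: disS.
- apply/eqP; rewrite eqEsubset subsetT /=; apply/subsetP => j _.
  by have [i _ jS] := covS j (in_setT j); apply/bigcupP; exists i.
- by move=> j; exact/ltW/p_gt0.
- by move=> i; split=> [|T]; [exact: budgetS | exact: demandS (subsetT T)].
Qed.

End Market.

Unset Implicit Arguments.

Theorem mainTheorem10 (R : realType) (n : nat) (M : finType)
    (pref : 'I_n -> {set M} -> {set M} -> Prop) (b : 'I_n -> R) :
  (0 < n)%N ->
  (forall i, 0 < b i) ->
  (forall i i', i != i' -> b i != b i') ->
  (forall i, lexicographic (pref i)) ->
  exists (S : 'I_n -> {set M}) (p : M -> R), competitive_equilibrium pref b S p.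
Proof.
move=> n_gt0 b_gt0 b_inj pref_lex.
have agents : [set: 'I_n] != set0 by rewrite -card_gt0 cardsT card_ord.
have [S [p eqS]] := equilibrium_on_exists b_gt0 pref_lex b_inj [set: M] agents.
by exists S, p; apply: equilibrium_on_setT.
Qed.
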